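(* Let $n \ge 3$ be an integer and let $I$ be a degree-based topological index with coefficients $c_{12},c_{13},c_{22},c_{23},c_{33}$. Define $c'_{12} = c_{12}-4c_{22}+3c_{23}$, $c'_{13} = c_{13}-3c_{22}+2c_{23}$, $c'_{33} = c_{22}-2c_{23}+c_{33}$. If $\max\{c'_{12},c'_{13}\}<\min\{0,-c'_{33}\}$, then the cycle $C_n$ on $n$ vertices is, up to isomorphism, the only graph in $\mathcal{G}_3(n,n)$ that maximizes $I$.
   Context: For integers $n,m$, $\mathcal{G}_3(n,m)$ denotes the set of simple connected undirected graphs (chemical graphs) with $n$ vertices, $m$ edges and maximum degree at most $3$; in particular $\mathcal{G}_3(n,n)$ is the set of connected unicyclic graphs of order $n$ with maximum degree at most $3$. For a graph $G$ and $1\le i\le j$, an $ij$-edge is an edge whose endpoints have degrees $i$ and $j$, and $m_{ij}$ denotes the number of $ij$-edges of $G$. A degree-based topological index $I$ is a function on chemical graphs of order $n\ge 3$ of the form $I(G)=c_{12}m_{12}+c_{13}m_{13}+c_{22}m_{22}+c_{23}m_{23}+c_{33}m_{33}$, where the $c_{ij}$ are fixed real numbers. *)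

From HB Require Import structures.
From mathcomp Require Import all_boot all_order all_algebra fingroup perm.
Set Implicit Arguments. Unset Strict Implicit. Unset Printing Implicit Defensive.
Import Order.TTheory GRing.Theory Num.Theory.

Definition simple_graph n (g : rel 'I_n) : Prop :=
  irreflexive g /\ symmetric g.

Definition connected_graph n (g : rel 'I_n) : Prop :=
  forall u v : 'I_n, connect g u v.

Definition deg n (g : rel 'I_n) (v : 'I_n) : nat := #|[set u | g v u]|.

(* unordered edges, each represented once as (u,v) with u < v *)
Definition edges n (g : rel 'I_n) : {set 'I_n * 'I_n} :=
  [set p : 'I_n * 'I_n | (p.1 < p.2)%N && g p.1 p.2].

Definition num_edges n (g : rel 'I_n) : nat := #|edges g|.

(* G_3(n,m): simple connected graphs of order n, size m, max degree <= 3 *)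
Definition chemical n (m : nat) (g : rel 'I_n) : Prop :=
  [/\ simple_graph g, connected_graph g, num_edges g = m
    & forall v, (deg g v <= 3)%N].

Definition mij n (g : rel 'I_n) (i j : nat) : nat :=
  #|[set p in edges g | ((deg g p.1 == i) && (deg g p.2 == j))
                     || ((deg g p.1 == j) && (deg g p.2 == i))]|.

Definition topo_index (R : realFieldType) (c12 c13 c22 c23 c33 : R)
  n (g : rel 'I_n) : R :=
  (c12 *+ mij g 1 2 + c13 *+ mij g 1 3 + c22 *+ mij g 2 2
   + c23 *+ mij g 2 3 + c33 *+ mij g 3 3)%R.

Definition cycle_graph n : rel 'I_n :=
  fun i j => ((j : nat) == i.+1 %% n) || ((i : nat) == j.+1 %% n).

Definition isomorphic n (g h : rel 'I_n) : Prop :=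
  exists f : {perm 'I_n}, forall i j, g i j = h (f i) (f j).

From HB Require Import structures.
From mathcomp Require Import all_boot all_order all_algebra fingroup perm.
From mathcomp Require Import zify ring lra.
Set Implicit Arguments.
Unset Strict Implicit.
Unset Printing Implicit Defensive.

Import Order.TTheory GRing.Theory Num.Theory.
Local Open Scope ring_scope.

(* Put h(1) = -3, h(2) = 0, h(3) = 1.  On every edge that does not join two
   pendant vertices, the coefficient c_ab of I equals
   c22 + c'_ab + (c23 - c22) (h a + h b), where c'_ab is c'12, c'13, c'33 on
   12-, 13-, 33-edges and 0 otherwise.  Summing over the edges of a unicyclic
   chemical graph, the h-part becomes sum_v deg v h(deg v) = 3 sum_v (deg v - 2)
   = 0, so I(G) = c22 n + sum_e c'_e, while I(C_n) = c22 n.  The 12- and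
   13-edges number n1 (no edge joins two pendant vertices); a spanning-forest
   count gives m33 <= n3; and n3 = n1 since the degrees sum to 2n.  Hence
   sum_e c'_e <= M n1 + c'33 m33 with M = max(c'12, c'13), which is negative
   unless n1 = 0, because M < 0 and M + c'33 < 0.  If n1 = 0 then G is
   2-regular and connected, and following its non-backtracking walk exhibits an
   isomorphism with C_n. *)

Lemma connect_invariant (T : finType) (e : rel T) (P : T -> Prop) :
  (forall x y, P x -> e x y -> P y) -> forall x y, P x -> connect e x y -> P y.
Proof.
move=> eP x y Px /connectP [p xp ->].
by elim: p x Px xp => [|z p IHp] x Px //= /andP[/(eP _ _ Px) Pz /(IHp z Pz)].
Qed.

Section SimpleGraph.

Variables (n : nat) (g : rel 'I_n).
Hypotheses (g_irr : irreflexive g) (g_sym : symmetric g).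

Lemma handshake (V : nmodType) (F : 'I_n -> V) :
  \sum_(e in edges g) (F e.1 + F e.2) = \sum_v F v *+ deg g v.
Proof.
have degE v : F v *+ deg g v = \sum_u (if g v u then F v else 0).
  by rewrite -big_mkcond -sumr_const; apply: eq_bigl => u; rewrite inE.
rewrite (eq_bigr _ (fun v _ => degE v)) pair_bigA big_mkcond /=.
rewrite (eq_bigr (fun p => (if p \in edges g then F p.1 else 0)
                          + (if p \in edges g then F p.2 else 0))); last first.
  by move=> p _; case: (p \in edges g); rewrite ?addr0.
rewrite big_split /= [X in _ + X](reindex_inj (can_inj swap_pairK)) -big_split.
apply: eq_bigr => -[a b] _ /=; rewrite !inE /=.
case: (ltngtP a b) => [//|ba|/val_inj ->]; first by rewrite addr0.
- by rewrite g_sym add0r.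
- by rewrite g_irr addr0.
Qed.

Lemma handshake_nat : (2 * num_edges g)%N = (\sum_v deg g v)%N.
Proof.
have := @handshake nat (fun _ => 1%N); rewrite sum_nat_const mulnC => ->.
by apply: eq_bigr => v _; rewrite natn.
Qed.

Section Connected.

Hypothesis g_conn : connected_graph g.

Lemma deg_gt0 v : (1 < n)%N -> (0 < deg g v)%N.
Proof.
move=> n_gt1; have /card_gt0P [u] : (0 < #|[set~ v]|)%N.
  by rewrite cardsC1 card_ord -ltnS prednK //; lia.
rewrite !inE => uv; case/connectP: (g_conn v u) => -[|x p] /=.
  by move=> _ uvE; rewrite uvE eqxx in uv.
by case/andP => gvx _ _; apply/card_gt0P; exists x; rewrite inE.
Qed.

Lemma pendant_nbr u v w : deg g u = 1%N -> g u v -> g u w -> w = v.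
Proof.
move=> /eqP/cards1P [x Nu] guv guw.
have : v \in [set x] by rewrite -Nu inE.
have : w \in [set x] by rewrite -Nu inE.
by rewrite !inE => /eqP -> /eqP ->.
Qed.

Lemma edge_not_pendant u v : (2 < n)%N -> g u v ->
  ~~ ((deg g u == 1%N) && (deg g v == 1%N)).
Proof.
move=> n_gt2 guv; apply/negP => /andP [/eqP du /eqP dv].
have /card_gt0P [w] : (0 < #|~: [set u; v]|)%N.
  by have := cardsC [set u; v]; rewrite card_ord cards2; case: (u != v) => /=; lia.
rewrite !inE negb_or => /andP [/negP wu /negP wv].
have uv_closed x y : x \in [set u; v] -> g x y -> y \in [set u; v].
  rewrite !inE => /orP [] /eqP -> gxy; apply/orP.
    by right; rewrite (pendant_nbr du guv gxy).
  by left; rewrite (pendant_nbr dv (_ : g v u) gxy) // g_sym.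
have := connect_invariant uv_closed (set21 u v) (g_conn u w).
by rewrite !inE => /orP [] /eqP wE; [apply: wu | apply: wv]; rewrite wE.
Qed.

Definition inner_edges (S : {set 'I_n}) : {set 'I_n * 'I_n} :=
  [set e in edges g | (e.1 \in S) && (e.2 \in S)].

Lemma crossing_edge (S : {set 'I_n}) x y : x \in S -> y \notin S ->
  exists u v, [/\ u \in S, v \notin S & g u v].
Proof.
move=> xS yS; case: (boolP [exists u in S, exists v in ~: S, g u v]).
  by case/exists_inP => u uS /exists_inP [v]; rewrite inE => vS guv; exists u, v.
move/exists_inPn => noexit; have S_closed u v : u \in S -> g u v -> v \in S.
  move=> uS guv; apply/negPn/negP => vS.
  by have := exists_inPn (noexit u uS) v; rewrite inE guv => /(_ vS).
by have := connect_invariant S_closed xS (g_conn x y); rewrite (negbTE yS).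
Qed.

Lemma edge_between u v : u != v -> g u v ->
  exists2 e, e \in edges g & (e == (u, v)) || (e == (v, u)).
Proof.
move=> uv guv; case: (ltngtP u v) => [lt_uv|lt_vu|/val_inj uvE].
- by exists (u, v); rewrite ?eqxx // inE lt_uv guv.
- by exists (v, u); rewrite ?eqxx ?orbT // inE lt_vu g_sym guv.
- by rewrite uvE eqxx in uv.
Qed.

(* Induction on #|~: S|: moving the outer endpoint of a crossing edge into S
   turns that edge into a new inner edge. *)
Lemma inner_edges_outside_le (S : {set 'I_n}) : S != set0 ->
  (#|inner_edges S| + #|~: S| <= num_edges g)%N.
Proof.
move: {2}#|~: S| (erefl #|~: S|) => k; elim: k S => [|k IHk] S outS /set0Pn [x xS].
  by rewrite outS addn0; apply/subset_leq_card/subsetP => e; rewrite inE => /andP [].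
have /card_gt0P [y] : (0 < #|~: S|)%N by rewrite outS.
rewrite inE => yS; have [u [v [uS vS guv]]] := crossing_edge xS yS.
have uv : u != v by apply: contraNneq vS => <-.
have [e eE euv] := edge_between uv guv.
have Sv0 : v |: S != set0 by apply/set0Pn; exists v; rewrite setU11.
have outSv : #|~: (v |: S)| = k.
  have := cardsD1 v (~: S); rewrite in_setC vS outS add1n => -[->].
  by apply: eq_card => z; rewrite !inE negb_or.
apply: leq_trans (IHk _ outSv Sv0); rewrite outS outSv addnS -addSn leq_add2r.
have e_new : e \notin inner_edges S.
  by rewrite inE; case/orP: euv => /eqP -> /=; rewrite (negbTE vS) ?andbF.
apply: leq_trans (_ : #|e |: inner_edges S| <= _)%N; first by rewrite cardsU1 e_new.
apply/subset_leq_card/subsetP => f.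
rewrite in_setU1 => /orP [/eqP -> | ].
  by rewrite inE eE; case/orP: euv => /eqP -> /=; rewrite !inE uS eqxx ?orbT.
by rewrite !inE => /and3P [-> -> ->]; rewrite !orbT.
Qed.

Lemma inner_edges_le_card (S : {set 'I_n}) : num_edges g = n ->
  (#|inner_edges S| <= #|S|)%N.
Proof.
move=> m_eq_n; have [-> | S_ne0] := eqVneq S set0.
  rewrite cards0 leqn0 cards_eq0; apply/eqP/setP => e.
  by rewrite !inE andbC.
have := inner_edges_outside_le S_ne0; have := cardsC S; rewrite card_ord m_eq_n; lia.
Qed.

End Connected.
End SimpleGraph.

Lemma modSn_small n u : (u < n)%N -> (u.+1 %% n = if u.+1 < n then u.+1 else 0)%N.
Proof.
move=> un; case: ltnP => h; first by rewrite modn_small.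
have -> : u.+1 = n by lia.
by rewrite modnn.
Qed.

Lemma cycle_graph_mod n (i j : 'I_n) :
  cycle_graph i j = (j == i.+1 %[mod n]) || (i == j.+1 %[mod n]).
Proof. by rewrite /cycle_graph !(modn_small (ltn_ord _)). Qed.

Section CycleGraph.

Variable n : nat.
Hypothesis n_ge3 : (3 <= n)%N.

Lemma cycle_graph_irr : irreflexive (@cycle_graph n).
Proof.
move=> i; rewrite /cycle_graph !modSn_small //; have := ltn_ord i.
by case: ifP => h1 h2; apply/negbTE; rewrite negb_or; apply/andP; split; apply/eqP; lia.
Qed.

Lemma cycle_graph_sym : symmetric (@cycle_graph n).
Proof. by move=> i j; rewrite /cycle_graph orbC. Qed.

Lemma deg_cycle_graph i : deg (@cycle_graph n) i = 2%N.
Proof.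
have n_gt0 : (0 < n)%N by lia.
have pred_lt : ((if val i == 0%N then n.-1 else i.-1) < n)%N.
  by have := ltn_ord i; case: ifP => _; lia.
pose succ_i : 'I_n := Ordinal (ltn_pmod i.+1 n_gt0).
pose pred_i : 'I_n := Ordinal pred_lt.
rewrite /deg; have -> : [set u | cycle_graph i u] = [set succ_i; pred_i].
  apply/setP => u; rewrite !inE /cycle_graph -!val_eqE /=.
  have := ltn_ord u; have := ltn_ord i; rewrite !modSn_small //.
  by move=> ? ?; congr orb; apply/eqP/eqP; repeat case: ifP; lia.
rewrite cards2 -val_eqE /=; have := ltn_ord i; rewrite modSn_small //.
by repeat case: ifP; lia.
Qed.

Lemma cycle_graph_connected : connected_graph (@cycle_graph n).
Proof.
have n_gt0 : (0 < n)%N by lia.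
have from0 k (kn : (k < n)%N) : connect (@cycle_graph n) (Ordinal n_gt0) (Ordinal kn).
  elim: k kn => [|k IHk] kn.
    by rewrite (_ : Ordinal kn = Ordinal n_gt0) ?connect0 //; apply: val_inj.
  have kn' : (k < n)%N by lia.
  apply: connect_trans (IHk kn') (connect1 _).
  by rewrite /cycle_graph /= modn_small // eqxx.
move=> u v; apply: (@connect_trans _ _ (Ordinal n_gt0)).
  rewrite (sym_connect_sym cycle_graph_sym).
  by rewrite (_ : u = Ordinal (ltn_ord u)) //; apply: val_inj.
by rewrite (_ : v = Ordinal (ltn_ord v)) //; apply: val_inj.
Qed.

Lemma cycle_graph_chemical : chemical n (@cycle_graph n).
Proof.
split; [by split; [exact: cycle_graph_irr | exact: cycle_graph_sym] |
        exact: cycle_graph_connected | | by move=> v; rewrite deg_cycle_graph].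
apply/eqP; rewrite -(eqn_pmul2l (isT : (0 < 2)%N)) handshake_nat;
  [|exact: cycle_graph_irr|exact: cycle_graph_sym].
under eq_bigr do rewrite deg_cycle_graph.
by rewrite sum_nat_const card_ord mulnC.
Qed.

End CycleGraph.

Section TwoRegular.

Variables (n : nat) (g : rel 'I_n).
Hypotheses (g_irr : irreflexive g) (g_sym : symmetric g).
Hypotheses (g_conn : connected_graph g) (g_deg2 : forall v, deg g v = 2%N).
Hypothesis n_gt0 : (0 < n)%N.

Lemma deg2_nbr_cases v x y z : g v x -> g v y -> x != y -> g v z -> z = x \/ z = y.
Proof.
move=> gvx gvy xy gvz; have Nv : [set x; y] = [set u | g v u].
  apply/eqP; rewrite eqEcard cards2 xy -/(deg g v) g_deg2 leqnn andbT.
  by apply/subsetP => u; rewrite !inE => /orP [] /eqP ->.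
by move: gvz; rewrite -in_set -Nv !inE => /orP [] /eqP; [left | right].
Qed.

Lemma other_nbr_exists b a : exists u, g b u && (u != a).
Proof.
have /cards2P [x [y [xy Nb]]] : #|[set u | g b u]| == 2%N by rewrite -/(deg g b) g_deg2.
have : x \in [set u | g b u] by rewrite Nb !inE eqxx.
have : y \in [set u | g b u] by rewrite Nb !inE eqxx orbT.
rewrite !inE => gby gbx; case: (eqVneq x a) => [xa | xa]; last by exists x; rewrite gbx.
by exists y; rewrite gby -xa eq_sym.
Qed.

Definition other_nbr b a := odflt b [pick u | g b u && (u != a)].

Lemma other_nbrP b a : g b (other_nbr b a) && (other_nbr b a != a).
Proof.
rewrite /other_nbr; case: pickP => [u -> // | none].
by have [u] := other_nbr_exists b a; rewrite none.
Qed.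

Let v0 : 'I_n := Ordinal n_gt0.

Definition walk_darts k :=
  iter k (fun d : 'I_n * 'I_n => (d.2, other_nbr d.2 d.1)) (v0, other_nbr v0 v0).

Definition walk k := (walk_darts k).1.

Lemma walk_dartsE k : walk_darts k = (walk k, walk k.+1).
Proof. by rewrite /walk /=; case: (walk_darts k). Qed.

Lemma walkSS k : walk k.+2 = other_nbr (walk k.+1) (walk k).
Proof. by []. Qed.

Lemma walk_adj k : g (walk k) (walk k.+1).
Proof.
case: k => [|k]; first by case/andP: (other_nbrP v0 v0).
by rewrite walkSS; case/andP: (other_nbrP (walk k.+1) (walk k)).
Qed.

Lemma walkSS_neq k : walk k.+2 != walk k.
Proof. by rewrite walkSS; case/andP: (other_nbrP (walk k.+1) (walk k)). Qed.

Lemma walkS_neq k : walk k.+1 != walk k.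
Proof. by apply/eqP => wE; have := walk_adj k; rewrite -wE g_irr. Qed.

Lemma walk_nbr k u : g (walk k.+1) u -> u = walk k \/ u = walk k.+2.
Proof.
move=> gu; apply: deg2_nbr_cases gu; first by rewrite g_sym walk_adj.
  exact: walk_adj.
by rewrite eq_sym walkSS_neq.
Qed.

Lemma walk_repeats : exists j, [exists i : 'I_j, walk i == walk j].
Proof.
have [|/existsPn noRep] :=
  boolP [exists i : 'I_n.+1, exists j : 'I_n.+1, (i < j)%N && (walk i == walk j)].
  case/existsP => i /existsP [j /andP [ij wij]].
  by exists j; apply/existsP; exists (Ordinal ij).
suff /leq_card : injective (fun k : 'I_n.+1 => walk k) by rewrite !card_ord ltnn.
move=> i j /= wij; apply: val_inj; case: (ltngtP i j) => // [ij | ji].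
  by have := existsPn (noRep i) j; rewrite ij wij eqxx.
by have := existsPn (noRep j) i; rewrite ji wij eqxx.
Qed.

Definition period := ex_minn walk_repeats.

Lemma walk_uniq a b : (a < b)%N -> (b < period)%N -> walk a != walk b.
Proof.
rewrite /period; case: ex_minnP => p _ p_min ab bp; apply/eqP => wab.
have : (p <= b)%N by apply: p_min; apply/existsP; exists (Ordinal ab); rewrite wab.
by rewrite leqNgt bp.
Qed.

Lemma walk_repeats_period : exists2 i, (i < period)%N & walk i = walk period.
Proof.
by rewrite /period; case: ex_minnP => p /existsP [i /eqP wi] _; exists i.
Qed.

Lemma walk_period : walk period = walk 0.
Proof.
have [[// | i] ip wi] := walk_repeats_period.
have [p pE] : exists p, period = p.+1 by exists period.-1; rewrite prednK //; lia.
have /walk_nbr [] : g (walk i.+1) (walk p) by rewrite wi g_sym pE walk_adj.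
  by move/eqP; rewrite eq_sym (negbTE (walk_uniq _ _)) //; lia.
move=> wp; case: (ltngtP i.+2 p) => [lt_ip | lt_pi | ip2].
- by move: wp => /eqP; rewrite eq_sym (negbTE (walk_uniq _ _)) //; lia.
- have pE' : period = i.+2 by lia.
  by move: wi; rewrite pE' => /esym/eqP; rewrite (negbTE (walkS_neq _)).
- have pE' : period = i.+3 by rewrite pE -ip2.
  by move: wi; rewrite pE' => /esym/eqP; rewrite (negbTE (walkSS_neq _)).
Qed.

Lemma period_ge3 : (3 <= period)%N.
Proof.
have [i ip _] := walk_repeats_period.
have [p2 | [p1 | //]] : period = 2%N \/ period = 1%N \/ (3 <= period)%N by lia.
- by have := walkSS_neq 0; rewrite -p2 walk_period eqxx.
- by have := walkS_neq 0; rewrite -p1 walk_period eqxx.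
Qed.

Lemma walk_periodS : walk period.+1 = walk 1.
Proof.
have gp : g (walk 0) (walk period.-1).
  rewrite g_sym -walk_period -{2}(prednK (_ : 0 < period)%N) ?walk_adj //.
  by have := period_ge3; lia.
have w1p : walk 1 != walk period.-1 by apply: walk_uniq; have := period_ge3; lia.
have gpS : g (walk 0) (walk period.+1) by rewrite -walk_period walk_adj.
case: (deg2_nbr_cases (walk_adj 0) gp w1p gpS) => // wpS.
have pE : period.+1 = period.-1.+2 by have := period_ge3; lia.
by have := walkSS_neq period.-1; rewrite -pE wpS eqxx.
Qed.

Lemma walkD_period k : walk (k + period) = walk k.
Proof.
have : walk_darts (k + period) = walk_darts k.
  rewrite /walk_darts iterD -/(walk_darts period) walk_dartsE.
  by rewrite walk_period walk_periodS -walk_dartsE.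
by rewrite /walk => ->.
Qed.

Lemma walk_mod k : walk k = walk (k %% period).
Proof.
rewrite {1}(divn_eq k period); elim: (k %/ period)%N => [|q IHq]; first by rewrite mul0n add0n.
by rewrite mulSnr addnAC walkD_period.
Qed.

Lemma walk_inj_lt a b : (a < period)%N -> (b < period)%N -> walk a = walk b -> a = b.
Proof.
move=> ap bp wab; case: (ltngtP a b) => // [ab | ba].
- by have := walk_uniq ab bp; rewrite wab eqxx.
- by have := walk_uniq ba ap; rewrite wab eqxx.
Qed.

Lemma walk_surj u : exists k, u = walk k.
Proof.
have walk_closed x y : (exists k, x = walk k) -> g x y -> exists k, y = walk k.
  move=> [k ->]; rewrite -(walkD_period k).
  have -> : (k + period = (k + period).-1.+1)%N by have := period_ge3; lia.
  by case/walk_nbr => ->; eexists.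
have v0_walk : exists k, v0 = walk k by exists 0%N.
exact: (@connect_invariant _ g (fun x => exists k, x = walk k) walk_closed _ _ v0_walk).
Qed.

Lemma period_eq_n : period = n.
Proof.
have p_gt0 : (0 < period)%N by have := period_ge3; lia.
apply/eqP; rewrite eqn_leq; apply/andP; split.
  have /leq_card : injective (fun k : 'I_period => walk k).
    by move=> i j /walk_inj_lt ij; apply/val_inj/ij.
  by rewrite !card_ord.
pose idx (u : 'I_n) : 'I_period := odflt (Ordinal p_gt0) [pick k : 'I_period | u == walk k].
have idxK u : walk (idx u) = u.
  rewrite /idx; case: pickP => [k /eqP // | none].
  have [k uk] := walk_surj u; have := none (Ordinal (ltn_pmod k p_gt0)).
  by rewrite /= -walk_mod uk eqxx.
have /leq_card : injective idx by move=> u v uv; rewrite -(idxK u) -(idxK v) uv.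
by rewrite !card_ord.
Qed.

Lemma walk_eq_mod a b : (walk a == walk b) = (a == b %[mod n]).
Proof.
suff : (walk a == walk b) = (a == b %[mod period]) by rewrite period_eq_n.
apply/eqP/eqP => [| ab]; last by rewrite walk_mod ab -walk_mod.
have p_gt0 : (0 < period)%N by have := period_ge3; lia.
by rewrite walk_mod (walk_mod b) => /walk_inj_lt; apply; exact: ltn_pmod.
Qed.

Lemma walk_adjE a b :
  g (walk a) (walk b) = (b == a.+1 %[mod n]) || (a == b.+1 %[mod n]).
Proof.
apply/idP/orP => [| [] /eqP abE].
- have -> : walk a = walk (a + n).-1.+1.
    by apply/eqP; rewrite walk_eq_mod prednK ?modnDr //; lia.
  case/walk_nbr => /eqP; rewrite walk_eq_mod => /eqP bE; [right | left]; apply/eqP.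
    by rewrite -addn1 -modnDml bE modnDml addn1 prednK ?modnDr //; lia.
  by rewrite bE (_ : (a + n).-1.+2 = a.+1 + n)%N ?modnDr //; lia.
- have -> : walk b = walk a.+1 by apply/eqP; rewrite walk_eq_mod abE.
  exact: walk_adj.
- have -> : walk a = walk b.+1 by apply/eqP; rewrite walk_eq_mod abE.
  by rewrite g_sym walk_adj.
Qed.

Lemma two_regular_isomorphic_cycle : isomorphic g (@cycle_graph n).
Proof.
have walk_inj : injective (fun i : 'I_n => walk i).
  by move=> i j /eqP; rewrite walk_eq_mod !modn_small // => /eqP/val_inj.
exists (perm walk_inj)^-1%g => i j.
rewrite -{1}(permKV (perm walk_inj) i) -{1}(permKV (perm walk_inj) j) !permE /=.
by rewrite walk_adjE cycle_graph_mod.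
Qed.

End TwoRegular.

Lemma sumr_cond_const (V : nmodType) (T : finType) (E : {set T}) (Q : pred T)
    (c : V) :
  \sum_(e in E) (if Q e then c else 0) = c *+ #|[set e in E | Q e]|.
Proof. by rewrite -big_mkcondr -sumr_const; apply: eq_bigl => e; rewrite inE. Qed.

Lemma sumr_if_const (V : nmodType) (T : finType) (Q : pred T) (c : V) :
  \sum_(v : T) (if Q v then c else 0) = c *+ #|[set v | Q v]|.
Proof. by rewrite -big_mkcond -sumr_const; apply: eq_bigl => v; rewrite inE. Qed.

Lemma sumr_indicator (R : pzSemiRingType) (T : finType) (Q : pred T) :
  \sum_(v : T) (Q v)%:R = #|[set v | Q v]|%:R :> R.
Proof. by rewrite -sumr_if_const; apply: eq_bigr => v _; case: (Q v). Qed.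

Lemma natr_sub2 (R : comNzRingType) a : (1 <= a <= 3)%N ->
  a%:R - 2%:R = (a == 3%N)%:R - (a == 1%N)%:R :> R.
Proof. by case: a => [|[|[|[|a]]]] //= _; ring. Qed.

Section Coefficients.

Variable R : realFieldType.

Definition ij_pair (a b i j : nat) : bool :=
  ((a == i) && (b == j)) || ((a == j) && (b == i)).

Definition edge_coef (c12 c13 c22 c23 c33 : R) (a b : nat) : R :=
  (if ij_pair a b 1 2 then c12 else 0) + (if ij_pair a b 1 3 then c13 else 0)
  + (if ij_pair a b 2 2 then c22 else 0) + (if ij_pair a b 2 3 then c23 else 0)
  + (if ij_pair a b 3 3 then c33 else 0).

Definition reduced_coef (x12 x13 x33 : R) (a b : nat) : R :=
  (if ij_pair a b 1 2 then x12 else 0) + (if ij_pair a b 1 3 then x13 else 0)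
  + (if ij_pair a b 3 3 then x33 else 0).

Definition deg_potential (a : nat) : R :=
  if a == 1%N then -3%:R else if a == 2%N then 0 else 1.

Lemma edge_coef_decomp c12 c13 c22 c23 c33 a b :
  (1 <= a <= 3)%N -> (1 <= b <= 3)%N -> ~~ ((a == 1%N) && (b == 1%N)) ->
  edge_coef c12 c13 c22 c23 c33 a b =
  c22 + reduced_coef (c12 - 4%:R * c22 + 3%:R * c23) (c13 - 3%:R * c22 + 2%:R * c23)
                     (c22 - 2%:R * c23 + c33) a b
  + (c23 - c22) * (deg_potential a + deg_potential b).
Proof.
rewrite /edge_coef /reduced_coef /deg_potential /ij_pair.
by case: a => [|[|[|[|a]]]] //; case: b => [|[|[|[|b]]]] //= _ _ _; ring.
Qed.

Lemma reduced_coef_le x12 x13 x33 M a b :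
  (1 <= a <= 3)%N -> (1 <= b <= 3)%N -> ~~ ((a == 1%N) && (b == 1%N)) ->
  x12 <= M -> x13 <= M ->
  reduced_coef x12 x13 x33 a b <= (if a == 1%N then M else 0)
    + (if b == 1%N then M else 0) + (if (a == 3%N) && (b == 3%N) then x33 else 0).
Proof.
rewrite /reduced_coef /ij_pair.
by case: a => [|[|[|[|a]]]] //; case: b => [|[|[|[|b]]]] //= _ _ _; lra.
Qed.

Lemma deg_potential_mulrn a : (1 <= a <= 3)%N ->
  deg_potential a *+ a = 3%:R * (a%:R - 2%:R).
Proof. by rewrite /deg_potential; case: a => [|[|[|[|a]]]] //= _; ring. Qed.

Lemma weighted_count_le0 (M c : R) (x y : nat) :
  M < 0 -> M + c < 0 -> (y <= x)%N ->
  M *+ x + c *+ y <= 0 /\ (M *+ x + c *+ y = 0 -> x = 0%N).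
Proof.
rewrite -(ler_nat R) -[M *+ x]mulr_natr -[c *+ y]mulr_natr => M_lt0 Mc_lt0 yx.
have [y_ge0 x_ge0] := (ler0n R y, ler0n R x).
have max_lt0 : Num.max M (M + c) < 0 by rewrite gt_max M_lt0.
have [M_le_max Mc_le_max] : M <= Num.max M (M + c) /\ M + c <= Num.max M (M + c).
  by rewrite !le_max !lexx orbT.
have bound : M * x%:R + c * y%:R <= Num.max M (M + c) * x%:R.
  case: (lerP c 0) => c0.
    have := ler_wpM2r x_ge0 M_le_max.
    have := mulr_le0_ge0 c0 y_ge0; lra.
  have := ler_wpM2r x_ge0 Mc_le_max.
  have := ler_wpM2l (ltW c0) yx; rewrite mulrDl; lra.
split; first by apply: le_trans bound _; rewrite nmulr_rle0.
move=> eq0; apply/eqP; rewrite -(eqr_nat R) eq_le ler0n andbT leNgt.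
apply/negP => x_gt0; have := nmulr_rlt0 x%:R max_lt0.
by rewrite x_gt0 => /(le_lt_trans bound); rewrite eq0 ltxx.
Qed.

End Coefficients.

Lemma topo_index_edge_sum (R : realFieldType) (c12 c13 c22 c23 c33 : R)
    n (g : rel 'I_n) :
  topo_index c12 c13 c22 c23 c33 g =
  \sum_(e in edges g) edge_coef c12 c13 c22 c23 c33 (deg g e.1) (deg g e.2).
Proof. by rewrite /topo_index /mij -!sumr_cond_const -!big_split. Qed.

Section Unicyclic.

Variables (n : nat) (g : rel 'I_n).
Hypotheses (n_ge3 : (3 <= n)%N) (g_chem : chemical n g).

Let g_irr : irreflexive g. Proof. by case: g_chem => -[]. Qed.
Let g_sym : symmetric g. Proof. by case: g_chem => -[]. Qed.
Let g_conn : connected_graph g. Proof. by case: g_chem. Qed.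
Let g_size : num_edges g = n. Proof. by case: g_chem. Qed.

Lemma chemical_deg_range v : (1 <= deg g v <= 3)%N.
Proof. by case: g_chem => _ _ _ ->; rewrite andbT deg_gt0 //; lia. Qed.

Lemma chemical_edge_not_pendant e : e \in edges g ->
  ~~ ((deg g e.1 == 1%N) && (deg g e.2 == 1%N)).
Proof. by rewrite inE => /andP [_]; exact: edge_not_pendant. Qed.

Lemma unicyclic_sum_deg_sub2 (R : pzRingType) : \sum_v ((deg g v)%:R - 2%:R) = 0 :> R.
Proof.
rewrite sumrB -natr_sum -handshake_nat // g_size sumr_const card_ord.
by rewrite natrM mulr_natr subrr.
Qed.

Lemma unicyclic_card_deg3 : #|[set v | deg g v == 3%N]| = #|[set v | deg g v == 1%N]|.
Proof.
have := unicyclic_sum_deg_sub2 int.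
rewrite (eq_bigr _ (fun v _ => natr_sub2 _ (chemical_deg_range v))).
by rewrite sumrB !sumr_indicator => /eqP; rewrite subr_eq0 eqr_nat => /eqP.
Qed.

Lemma unicyclic_sum_deg_potential (R : realFieldType) :
  \sum_(e in edges g) (deg_potential R (deg g e.1) + deg_potential R (deg g e.2)) = 0.
Proof.
rewrite (handshake g_irr g_sym (fun v => deg_potential R (deg g v))).
under eq_bigr do rewrite deg_potential_mulrn ?chemical_deg_range //.
by rewrite -mulr_sumr unicyclic_sum_deg_sub2 mulr0.
Qed.

Lemma topo_index_unicyclic (R : realFieldType) (c12 c13 c22 c23 c33 : R) :
  topo_index c12 c13 c22 c23 c33 g = c22 *+ n
  + \sum_(e in edges g) reduced_coef (c12 - 4%:R * c22 + 3%:R * c23)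
      (c13 - 3%:R * c22 + 2%:R * c23) (c22 - 2%:R * c23 + c33) (deg g e.1) (deg g e.2).
Proof.
rewrite topo_index_edge_sum.
rewrite (eq_bigr _ (fun e eE => edge_coef_decomp c12 c13 c22 c23 c33
  (chemical_deg_range e.1) (chemical_deg_range e.2) (chemical_edge_not_pendant eE))).
rewrite !big_split /= -mulr_sumr unicyclic_sum_deg_potential mulr0 addr0.
by rewrite sumr_const -/(num_edges g) g_size.
Qed.

Lemma unicyclic_reduced_sum_le (R : realFieldType) (x12 x13 x33 M : R) :
  x12 <= M -> x13 <= M ->
  \sum_(e in edges g) reduced_coef x12 x13 x33 (deg g e.1) (deg g e.2)
  <= M *+ #|[set v | deg g v == 1%N]|
     + x33 *+ #|inner_edges g [set v | deg g v == 3%N]|.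
Proof.
move=> x12M x13M; apply: le_trans (ler_sum _ (fun e eE => reduced_coef_le x33
  (chemical_deg_range e.1) (chemical_deg_range e.2) (chemical_edge_not_pendant eE)
  x12M x13M)) _.
rewrite big_split /= (handshake g_irr g_sym (fun v => if deg g v == 1%N then M else 0)).
apply: lerD; last rewrite sumr_cond_const.
  by rewrite -sumr_if_const; apply/ler_sum => v _; case: eqP => [->|]; rewrite ?mul0rn.
suff -> : [set e in edges g | (deg g e.1 == 3%N) && (deg g e.2 == 3%N)]
          = inner_edges g [set v | deg g v == 3%N] by [].
by apply/setP => e; rewrite !inE.
Qed.

Lemma unicyclic_card_inner_deg3 :
  (#|inner_edges g [set v | deg g v == 3%N]| <= #|[set v | deg g v == 1%N]|)%N.
Proof. by rewrite -unicyclic_card_deg3; apply: inner_edges_le_card. Qed.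

Lemma unicyclic_deg2 : #|[set v | deg g v == 1%N]| = 0%N -> forall v, deg g v = 2%N.
Proof.
move=> no_deg1 v; have no_deg3 := no_deg1; rewrite -unicyclic_card_deg3 in no_deg3.
have := in_set0 v; rewrite -(cards0_eq no_deg1) inE.
have := in_set0 v; rewrite -{1}(cards0_eq no_deg3) inE.
by have := chemical_deg_range v; case: (deg g v) => [|[|[|[|d]]]].
Qed.

End Unicyclic.

Theorem corollary2 (R : realFieldType) (n : nat) (c12 c13 c22 c23 c33 : R) :
  (3 <= n)%N ->
  let c'12 := c12 - 4%:R * c22 + 3%:R * c23 in
  let c'13 := c13 - 3%:R * c22 + 2%:R * c23 in
  let c'33 := c22 - 2%:R * c23 + c33 in
  Num.max c'12 c'13 < Num.min 0 (- c'33) ->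
  chemical n (@cycle_graph n) /\
  (forall g : rel 'I_n, chemical n g ->
     topo_index c12 c13 c22 c23 c33 g <= topo_index c12 c13 c22 c23 c33 (@cycle_graph n)
     /\ (topo_index c12 c13 c22 c23 c33 g = topo_index c12 c13 c22 c23 c33 (@cycle_graph n) ->
         isomorphic g (@cycle_graph n))).
Proof.
move=> n_ge3 c'12 c'13 c'33; rewrite lt_min => /andP [M_lt0 M_lt_c'33].
have C_chem := cycle_graph_chemical n_ge3; split=> // g g_chem.
set M := Num.max c'12 c'13 in M_lt0 M_lt_c'33 *.
have M33_lt0 : M + c'33 < 0 by lra.
have -> : topo_index c12 c13 c22 c23 c33 (@cycle_graph n) = c22 *+ n.
  rewrite (topo_index_unicyclic n_ge3 C_chem) big1 ?addr0 // => e _.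
  by rewrite !(deg_cycle_graph n_ge3) /reduced_coef /= !addr0.
rewrite topo_index_unicyclic // -/c'12 -/c'13 -/c'33.
have [c'12_le c'13_le] : c'12 <= M /\ c'13 <= M by rewrite !le_max !lexx orbT.
have S_le := unicyclic_reduced_sum_le n_ge3 g_chem c'33 c'12_le c'13_le.
have [le0 eq0] :=
  weighted_count_le0 M_lt0 M33_lt0 (unicyclic_card_inner_deg3 n_ge3 g_chem).
split; first by rewrite gerDl (le_trans S_le).
rewrite -[RHS]addr0 => /addrI S_eq0.
have no_deg1 : #|[set v | deg g v == 1%N]| = 0%N.
  by apply: eq0; apply/eqP; rewrite eq_le le0 -S_eq0 S_le.
case: g_chem (unicyclic_deg2 n_ge3 g_chem no_deg1) => -[g_irr g_sym] g_conn _ _ g_deg2.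
by apply: two_regular_isomorphic_cycle => //; lia.
Qed.
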